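(* Let $i,j\geq 1$ and $n\geq 1$ be integers. Let $U(i,j,n)$ be the set of all triples $(L_1,L_2,L_3)$ of lattice walks of length $n$ with steps $U=(1,1)$ and $D=(1,-1)$, where $L_1$ starts at $(0,0)$, $L_2$ starts at $(0,2i)$ and $L_3$ starts at $(0,2i+2j)$. Let $M_{12,23}(n)$ be the set of triples $(L_1,L_2,L_3)\in U(i,j,n)$ such that $L_2$ intersects both $L_1$ and $L_3$, and let $M_{13}(n)$ be the set of triples $(L_1,L_2,L_3)\in U(i,j,n)$ such that $L_1$ intersects $L_3$. Then there exists a bijection between $M_{12,23}(n)$ and $M_{13}(n)$.
   Context: A walk of length $n$ is a lattice path consisting of $n$ steps, each an up step $(1,1)$ or a down step $(1,-1)$. Two walks are said to intersect if they share a common lattice point. *)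

From mathcomp Require Import all_boot all_order all_algebra.
Set Implicit Arguments. Unset Strict Implicit. Unset Printing Implicit Defensive.
Import Order.TTheory GRing.Theory Num.Theory.
Local Open Scope ring_scope.

(* A walk of length n: a sequence of n steps, true = up step (1,1),
   false = down step (1,-1). *)
Definition walk (n : nat) := {ffun 'I_n -> bool}.

Definition step_val (b : bool) : int := if b then 1 else -1.

Definition height (n : nat) (h0 : int) (w : walk n) (k : nat) : int :=
  h0 + \sum_(t < n | (t < k)%N) step_val (w t).

(* Two walks (with starting heights h1, h2) intersect iff they share a
   lattice point: since both have x-coordinates 0..n, this means equal
   heights at some common abscissa k in {0,...,n}. *)
Definition intersect (n : nat) (h1 : int) (w1 : walk n) (h2 : int) (w2 : walk n)
  : bool :=
  [exists k : 'I_n.+1, height h1 w1 k == height h2 w2 k].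

Definition triple (n : nat) := (walk n * walk n * walk n)%type.

Definition h1 : int := 0.
Definition h2 (i : nat) : int := (2 * i)%:Z.
Definition h3 (i j : nat) : int := (2 * i + 2 * j)%:Z.

(* U(i,j,n) is the set of all triples; these are its subsets. *)
Definition M12_23 (i j n : nat) : {set triple n} :=
  [set L : triple n |
     intersect h1 L.1.1 (h2 i) L.1.2 && intersect (h2 i) L.1.2 (h3 i j) L.2].

Definition M13 (i j n : nat) : {set triple n} :=
  [set L : triple n | intersect h1 L.1.1 (h3 i j) L.2].

(* Walks whose starting heights differ by an even number can only cross at a
   lattice point.  It suffices to compare M12_23 \ M13 with M13 \ M12_23.
   For a triple in M12_23 \ M13 in which L2 meets L1 before it meets L3,
   exchange the tails of L1 and L2 after their first common point: this keeps
   that point, makes L1 meet L3 and L2 miss L3, and is an involution between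
   those triples and the triples of M13 in which L2 misses L3.  Reflecting the
   picture upside down gives the same correspondence for the pair L2, L3. *)

From mathcomp Require Import all_boot all_order all_algebra zify.
Set Implicit Arguments. Unset Strict Implicit. Unset Printing Implicit Defensive.
Import Order.TTheory GRing.Theory Num.Theory.
Local Open Scope ring_scope.

Lemma card_eq_bij (T1 T2 : finType) : #|T1| = #|T2| -> exists f : T1 -> T2, bijective f.
Proof.
move=> eT; exists (fun x => enum_val (cast_ord eT (enum_rank x))).
exists (fun y => enum_val (cast_ord (esym eT) (enum_rank y))).
  by move=> x; rewrite enum_valK cast_ordK enum_rankK.
by move=> y; rewrite enum_valK cast_ordKV enum_rankK.
Qed.

Lemma card_in_involution (T : finType) (f : T -> T) (A B : {set T}) :
  {in A, forall a, f a \in B} -> {in B, forall b, f b \in A} ->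
  {in A, cancel f f} -> {in B, cancel f f} -> #|A| = #|B|.
Proof.
have le_card (C D : {set T}) :
    {in C, forall c, f c \in D} -> {in C, cancel f f} -> (#|C| <= #|D|)%N.
  move=> fCD fK; rewrite -(card_in_imset (can_in_inj fK)).
  by apply/subset_leq_card/subsetP => _ /imsetP [c Cc ->]; exact: fCD.
by move=> fAB fBA fKA fKB; apply/eqP; rewrite eqn_leq !le_card.
Qed.

Definition same_parity (x y : int) := exists z : int, x - y = 2 * z.

Lemma same_parity_opp (x y : int) : same_parity x y -> same_parity (- y) (- x).
Proof. by case=> z e; exists z; lia. Qed.

Section Walks.
Variable n : nat.
Implicit Types (v w : walk n) (x y : int) (a k m : nat).

Lemma height0 x w : height x w 0 = x.
Proof. by rewrite /height big_pred0 ?addr0. Qed.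

Lemma height_succ x w k (kn : (k < n)%N) :
  height x w k.+1 = height x w k + step_val (w (Ordinal kn)).
Proof.
rewrite /height (bigD1 (Ordinal kn)) //= -addrA [_ + step_val _]addrC.
congr (_ + (_ + _)); apply: eq_bigl => t.
by rewrite ltnS leq_eqVlt -val_eqE /=; case: (ltngtP t k).
Qed.

Lemma height_succ_end x w k : (n <= k)%N -> height x w k.+1 = height x w k.
Proof.
move=> nk; rewrite /height; congr (_ + _); apply: eq_bigl => t.
have := ltn_ord t; lia.
Qed.

Lemma gap_succ x y w v k : exists2 d : int, -1 <= d <= 1 &
  height x w k.+1 - height y v k.+1 = height x w k - height y v k + 2 * d.
Proof.
have [kn|nk] := ltnP k n; last by exists 0; rewrite ?height_succ_end //; lia.
rewrite !(height_succ _ _ kn).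
case: (w _) (v _) => -[]; rewrite /step_val; [exists 0|exists 1|exists (-1)|exists 0]; lia.
Qed.

Lemma gap_parity x y w v k :
  same_parity x y -> same_parity (height x w k) (height y v k).
Proof.
move=> xy; elim: k => [|k [z ez]]; first by rewrite !height0.
by have [d _ ed] := gap_succ x y w v k; exists (z + d); lia.
Qed.

(* The gap between the walks is even and moves by at most 2 per step, so it
   cannot change sign without vanishing. *)
Lemma meet_before x y w v m : same_parity x y -> x <= y ->
  height y v m <= height x w m -> exists2 k, (k <= m)%N & height x w k = height y v k.
Proof.
move=> xy le_xy; elim: m => [|m IHm] ge_m.
  by exists 0%N; rewrite // !height0 in ge_m *; lia.
have [le_m|lt_m] := lerP (height y v m) (height x w m).
  by have [k km ek] := IHm le_m; exists k; first exact: leqW.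
exists m.+1 => //.
have [z ez] := gap_parity w v m xy; have [d d1 ed] := gap_succ x y w v m.
lia.
Qed.

Lemma lt_height_before_meet x y w v m : same_parity x y -> x < y ->
  (forall k, (k < m)%N -> height x w k != height y v k) ->
  forall k, (k < m)%N -> height x w k < height y v k.
Proof.
move=> xy lt_xy ne_m k km; rewrite ltNge; apply/negP => ge_k.
have [k' k'k ek'] := meet_before xy (ltW lt_xy) ge_k.
by have := ne_m k' (leq_ltn_trans k'k km); rewrite ek' eqxx.
Qed.

Lemma intersectP x w y v :
  reflect (exists2 k, (k <= n)%N & height x w k = height y v k) (intersect x w y v).
Proof.
apply: (iffP existsP) => [[k /eqP ek]|[k kn ek]]; first by exists k; rewrite -1?ltnS.
by exists (Ordinal (kn : (k < n.+1)%N)); apply/eqP.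
Qed.

Lemma lt_height_disjoint x y w v : same_parity x y -> x < y ->
  ~~ intersect x w y v -> forall k, (k <= n)%N -> height x w k < height y v k.
Proof.
move=> xy lt_xy miss k kn; apply: (lt_height_before_meet (m := n.+1)) => // k' k'n.
by apply/eqP => ek; case/negP: miss; apply/intersectP; exists k'.
Qed.

Definition first_meet x w y v : nat :=
  find (fun k => height x w k == height y v k) (iota 0 n.+1).

Lemma first_meetP x w y v : intersect x w y v ->
  [/\ (first_meet x w y v <= n)%N,
      height x w (first_meet x w y v) = height y v (first_meet x w y v)
    & forall k, (k < first_meet x w y v)%N -> height x w k != height y v k].
Proof.
move=> /intersectP [k kn ek].
have meet : has (fun k => height x w k == height y v k) (iota 0 n.+1).
  by apply/hasP; exists k; [rewrite mem_iota | apply/eqP].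
have lt_first := meet; rewrite has_find size_iota in lt_first.
split; first by rewrite -ltnS.
  by have := nth_find 0 meet; rewrite nth_iota // add0n => /eqP.
move=> j lt_j; have := before_find 0 lt_j.
by rewrite nth_iota ?add0n // => [->|]; last exact: ltn_trans lt_j lt_first.
Qed.

Lemma first_meet_eq x w y v m : (m <= n)%N -> height x w m = height y v m ->
  (forall k, (k < m)%N -> height x w k != height y v k) -> first_meet x w y v = m.
Proof.
move=> mn em ne_m.
have meet : intersect x w y v by apply/intersectP; exists m.
have [_ ef ne_f] := first_meetP meet.
case: (ltngtP (first_meet x w y v) m) => // lt.
  by move/eqP: (ne_m _ lt).
by move/eqP: (ne_f _ lt).
Qed.

Definition splice w v a : walk n :=
  [ffun t : 'I_n => if (t < a)%N then w t else v t].

Lemma height_splice x y w v a k : height x w a = height y v a ->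
  height x (splice w v a) k = if (k <= a)%N then height x w k else height y v k.
Proof.
move=> ea; elim: k => [|k IHk]; first by rewrite !height0.
have [kn|nk] := ltnP k n.
  rewrite !(height_succ _ _ kn) ffunE /= IHk.
  by case: (ltngtP k a) => [//|//|ka]; rewrite -ka in ea; rewrite ea.
rewrite !height_succ_end // IHk.
by case: (ltngtP k a) => [//|//|ka]; rewrite -ka in ea; rewrite ea.
Qed.

Lemma spliceK w v a : splice (splice w v a) (splice v w a) a = w.
Proof. by apply/ffunP => t; rewrite !ffunE; case: ltnP. Qed.

Definition negw w : walk n := [ffun t => ~~ w t].

Lemma negwK : involutive negw.
Proof. by move=> w; apply/ffunP => t; rewrite !ffunE negbK. Qed.

Lemma height_negw x w k : height (- x) (negw w) k = - height x w k.
Proof.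
rewrite /height opprD -sumrN; congr (_ + _); apply: eq_bigr => t _.
by rewrite ffunE; case: (w t).
Qed.

Lemma meet_negw x w y v k :
  (height (- y) (negw v) k == height (- x) (negw w) k) = (height x w k == height y v k).
Proof. by rewrite !height_negw eqr_opp eq_sym. Qed.

Lemma intersect_negw x w y v :
  intersect (- y) (negw v) (- x) (negw w) = intersect x w y v.
Proof. by apply: eq_existsb => k; rewrite meet_negw. Qed.

Lemma first_meet_negw x w y v :
  first_meet (- y) (negw v) (- x) (negw w) = first_meet x w y v.
Proof. by apply: eq_find => k; rewrite meet_negw. Qed.

End Walks.

Section LowerSwap.
Variables (n : nat) (x y z : int).
Hypotheses (xy : same_parity x y) (yz : same_parity y z).
Hypotheses (lt_xy : x < y) (lt_yz : y < z).
Implicit Type L : triple n.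

Definition meets12 L := intersect x L.1.1 y L.1.2.
Definition meets23 L := intersect y L.1.2 z L.2.
Definition meets13 L := intersect x L.1.1 z L.2.
Definition first12 L := first_meet x L.1.1 y L.1.2.
Definition first23 L := first_meet y L.1.2 z L.2.

Definition swap12 L : triple n :=
  ((splice L.1.1 L.1.2 (first12 L), splice L.1.2 L.1.1 (first12 L)), L.2).

Lemma height_swap12 L : meets12 L -> forall k,
  height x (swap12 L).1.1 k =
    (if (k <= first12 L)%N then height x L.1.1 k else height y L.1.2 k) /\
  height y (swap12 L).1.2 k =
    (if (k <= first12 L)%N then height y L.1.2 k else height x L.1.1 k).
Proof.
move=> m12 k; have [_ ea _] := first_meetP m12.
by split; [exact: height_splice ea | exact: height_splice (esym ea)].
Qed.

Lemma first12_swap12 L : meets12 L -> first12 (swap12 L) = first12 L.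
Proof.
move=> m12; have [an ea before_a] := first_meetP m12; have H := height_swap12 m12.
apply: first_meet_eq => [//||k ka]; first by rewrite (H _).1 (H _).2 leqnn.
by rewrite (H k).1 (H k).2 ltnW //; exact: before_a.
Qed.

Lemma swap12K L : meets12 L -> swap12 (swap12 L) = L.
Proof.
move=> m12; rewrite {1}/swap12 (first12_swap12 m12) /= !spliceK.
by case: L {m12} => [[]].
Qed.

Lemma meets12_of_meets13 L : meets13 L -> ~~ meets23 L -> meets12 L.
Proof.
move=> /intersectP [c cn ec] miss23.
have lt23 := lt_height_disjoint yz lt_yz miss23.
have [|k kc ek] := meet_before (w := L.1.1) (v := L.1.2) (m := c) xy (ltW lt_xy); first by rewrite ec ltW ?lt23.
by apply/intersectP; exists k; first exact: leq_trans kc cn.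
Qed.

Lemma swap12_meet12_first L :
  [&& meets12 L, meets23 L, ~~ meets13 L & (first12 L < first23 L)%N] ->
  meets13 (swap12 L) && ~~ meets23 (swap12 L).
Proof.
case/and4P => m12 m23 miss13 ab; have [bn eb before_b] := first_meetP m23.
have H := height_swap12 m12.
apply/andP; split.
  by apply/intersectP; exists (first23 L) => //; rewrite (H _).1 leqNgt ab.
apply/intersectP => -[k kn]; rewrite (H k).2; case: leqP => [ka|ak] ek.
  by have := before_b k (leq_ltn_trans ka ab); rewrite ek eqxx.
by case/negP: miss13; apply/intersectP; exists k.
Qed.

Lemma swap12_meet13_miss23 L : meets13 L && ~~ meets23 L ->
  [&& meets12 (swap12 L), meets23 (swap12 L), ~~ meets13 (swap12 L)
    & (first12 (swap12 L) < first23 (swap12 L))%N].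
Proof.
case/andP => m13 miss23; have m12 := meets12_of_meets13 m13 miss23.
have lt23 := lt_height_disjoint yz lt_yz miss23.
have [an ea before_a] := first_meetP m12.
have lt12 := lt_height_before_meet xy lt_xy before_a.
have lt13 k : (k <= first12 L)%N -> height x L.1.1 k < height z L.2 k.
  move=> ka; have kn := leq_trans ka an.
  rewrite leq_eqVlt in ka; case/orP: ka => [/eqP -> | ka].
    by rewrite ea lt23.
  exact: lt_trans (lt12 _ ka) (lt23 _ kn).
have H := height_swap12 m12.
have /intersectP [c cn ec] := m13.
have ac : (first12 L < c)%N.
  by rewrite ltnNge; apply/negP => ca; have := lt13 c ca; rewrite ec ltxx.
have m12' : meets12 (swap12 L).
  by apply/intersectP; exists (first12 L) => //; rewrite (H _).1 (H _).2 leqnn.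
have m23' : meets23 (swap12 L).
  by apply/intersectP; exists c => //; rewrite (H c).2 leqNgt ac.
rewrite m12' m23' (first12_swap12 m12) /=; apply/andP; split.
  apply/intersectP => -[k kn]; rewrite (H k).1; case: leqP => [ka|ak] ek.
    by have := lt13 k ka; rewrite ek ltxx.
  by have := lt23 k kn; rewrite ek ltxx.
rewrite ltnNge; apply/negP => ba; have [bn eb _] := first_meetP m23'.
by move: eb; rewrite (H _).2 ba => eb; have := lt23 _ bn; rewrite eb ltxx.
Qed.

Definition meet12_first := [set L : triple n |
  [&& meets12 L, meets23 L, ~~ meets13 L & (first12 L < first23 L)%N]].
Definition meet13_miss23 := [set L : triple n | meets13 L && ~~ meets23 L].

Lemma card_meet12_first : #|meet12_first| = #|meet13_miss23|.
Proof.
apply: (card_in_involution (f := swap12)) => L; rewrite !inE.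
- exact: swap12_meet12_first.
- exact: swap12_meet13_miss23.
- by case/and4P => m12 _ _ _; exact: swap12K.
- by case/andP => m13 miss23; apply/swap12K/meets12_of_meets13.
Qed.

End LowerSwap.

Section Reflection.
Variables (n : nat) (x y z : int).
Hypotheses (xy : same_parity x y) (yz : same_parity y z).
Hypotheses (lt_xy : x < y) (lt_yz : y < z).
Implicit Type L : triple n.

(* Reflect the triple in the horizontal axis and relabel it from the top, so
   that the pair L2, L3 becomes the lower pair. *)
Definition flip L : triple n := ((negw L.2, negw L.1.2), negw L.1.1).

Lemma flipK : involutive flip.
Proof. by case=> [[u v] w]; rewrite /flip /= !negwK. Qed.

Definition meet23_first := [set L : triple n |
  [&& meets12 x y L, meets23 y z L, ~~ meets13 x z L
    & (first23 y z L < first12 x y L)%N]].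
Definition meet13_miss12 := [set L : triple n | meets13 x z L && ~~ meets12 x y L].

Lemma card_meet23_first : #|meet23_first| = #|meet13_miss12|.
Proof.
have -> : meet23_first = flip @^-1: meet12_first n (- z) (- y) (- x).
  apply/setP => L; rewrite !inE /meets12 /meets23 /meets13 /first12 /first23 /=.
  by rewrite !intersect_negw !first_meet_negw andbCA.
have -> : meet13_miss12 = flip @^-1: meet13_miss23 n (- z) (- y) (- x).
  apply/setP => L; rewrite !inE /meets12 /meets23 /meets13 /=.
  by rewrite !intersect_negw.
rewrite !(card_preimset _ (can_inj flipK)).
apply: card_meet12_first; rewrite ?ltrN2 //; exact: same_parity_opp.
Qed.

Lemma first12_neq_first23 L :
  meets12 x y L -> meets23 y z L -> ~~ meets13 x z L -> first12 x y L != first23 y z L.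
Proof.
move=> m12 m23 miss13; apply/eqP => eab.
have [an ea _] := first_meetP m12; have [_ eb _] := first_meetP m23.
rewrite -/(first12 x y L) in ea; rewrite -/(first23 y z L) in eb.
by case/negP: miss13; apply/intersectP; exists (first12 x y L); rewrite // ea eab eb.
Qed.

Lemma card_meets12_23 :
  #|[set L : triple n | meets12 x y L && meets23 y z L]| = #|[set L : triple n | meets13 x z L]|.
Proof.
set X := [set L | _ && _]; set Y := [set L | _].
have eXY : X :\: Y = meet12_first n x y z :|: meet23_first.
  apply/setP => L; rewrite !inE.
  case m12: (meets12 x y L); case m23: (meets23 y z L); case m13: (meets13 x z L) => //=.
  by have := first12_neq_first23 m12 m23 (negbT m13); case: ltngtP.
have eYX : Y :\: X = meet13_miss23 n x y z :|: meet13_miss12.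
  apply/setP => L; rewrite !inE.
  by case: (meets12 x y L); case: (meets23 y z L); case: (meets13 x z L).
have dXY : meet12_first n x y z :&: meet23_first = set0.
  by apply/setP => L; rewrite !inE; case: ltngtP; rewrite ?andbF.
have dYX : meet13_miss23 n x y z :&: meet13_miss12 = set0.
  apply/setP => L; rewrite !inE.
  case m13: (meets13 x z L); case m23: (meets23 y z L) => //=.
  by rewrite (meets12_of_meets13 xy yz lt_xy lt_yz m13 (negbT m23)).
rewrite -(cardsID Y X) -(cardsID X Y) setIC eXY eYX !cardsU dXY dYX !cards0.
by rewrite card_meet12_first // card_meet23_first.
Qed.

End Reflection.

Theorem theorem2p1 (i j n : nat) (hi : (1 <= i)%N) (hj : (1 <= j)%N) (hn : (1 <= n)%N) :
  exists f : {L : triple n | L \in M12_23 i j n} -> {L : triple n | L \in M13 i j n},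
    bijective f.
Proof.
have xy : same_parity h1 (h2 i) by exists (- i%:Z); rewrite /h1 /h2; lia.
have yz : same_parity (h2 i) (h3 i j) by exists (- j%:Z); rewrite /h2 /h3; lia.
have lt_xy : h1 < h2 i by rewrite /h1 /h2; lia.
have lt_yz : h2 i < h3 i j by rewrite /h2 /h3; lia.
apply: card_eq_bij; rewrite !card_sig.
exact: (card_meets12_23 n xy yz lt_xy lt_yz).
Qed.
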